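(* Let $n\ge 3$ be an odd integer and $(\mathcal{C},\Sigma)$ an $n$-angulated category. For a subgroup $H$ of $K_0(\mathcal{C})$, let $\mathcal{A}_H$ be the full subcategory of $\mathcal{C}$ consisting of the objects $A$ with $[A]\in H$. Declare the $n$-angles of $\mathcal{A}_H$ to be those $n$-angles of $\mathcal{C}$ all of whose objects lie in $\mathcal{A}_H$. Then $(\mathcal{A}_H,\Sigma)$ is a complete and dense $n$-angulated subcategory of $(\mathcal{C},\Sigma)$.
   Context: All categories are small. Fix an integer $n\ge 3$. Let $\mathcal{C}$ be an additive category with an automorphism $\Sigma$. An $n$-$\Sigma$-sequence in $\mathcal{C}$ is a diagram $A_1\xrightarrow{\alpha_1}A_2\xrightarrow{\alpha_2}\cdots\xrightarrow{\alpha_{n-1}}A_n\xrightarrow{\alpha_n}\Sigma A_1$. Its left rotation is $A_2\xrightarrow{\alpha_2}\cdots\xrightarrow{\alpha_n}\Sigma A_1\xrightarrow{(-1)^n\Sigma\alpha_1}\Sigma A_2$. A morphism from $(A_\bullet,\alpha)$ to $(B_\bullet,\beta)$ is a tuple $(\varphi_1,\dots,\varphi_n)$, $\varphi_i:A_i\to B_i$, with $\beta_i\varphi_i=\varphi_{i+1}\alpha_i$ for $1\le i\le n-1$ and $\beta_n\varphi_n=(\Sigma\varphi_1)\alpha_n$; it is an isomorphism if all $\varphi_i$ are isomorphisms. Direct sums of sequences are taken termwise. $(\mathcal{C},\Sigma)$ is $n$-angulated if it is equipped with a collection $\mathscr N$ of $n$-$\Sigma$-sequences, called $n$-angles, such that: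 (N1)(a) $\mathscr N$ is closed under direct sums, direct summands and isomorphisms of $n$-$\Sigma$-sequences; (b) for every object $A$, the trivial sequence $A\xrightarrow{1}A\to0\to\cdots\to0\to\Sigma A$ is in $\mathscr N$; (c) every morphism $A_1\to A_2$ is the first morphism of some $n$-angle; (N2) an $n$-$\Sigma$-sequence is in $\mathscr N$ iff its left rotation is; (N3) given $n$-angles $(A_\bullet,\alpha),(B_\bullet,\beta)$ and $\varphi_1:A_1\to B_1$, $\varphi_2:A_2\to B_2$ with $\beta_1\varphi_1=\varphi_2\alpha_1$, there exist $\varphi_3,\dots,\varphi_n$ making $(\varphi_1,\dots,\varphi_n)$ a morphism; (N4) in (N3) the $\varphi_i$ can be chosen so that the mapping cone $A_2\oplus B_1\to A_3\oplus B_2\to\cdots\to\Sigma A_1\oplus B_n\to\Sigma A_2\oplus\Sigma B_1$, with maps $\left[\begin{smallmatrix}-\alpha_{i+1}&0\\ \varphi_{i+1}&\beta_i\end{smallmatrix}\right]$ ($1\le i\le n-1$) and last map $\left[\begin{smallmatrix}-\Sigma\alpha_1&0\\ \Sigma\varphi_1&\beta_n\end{smallmatrix}\right]$, is an $n$-angle. Grothendieck group: $F(\mathcal{C})$ is the free abelian group on isomorphism classes $\langle A\rangle$ of objects; for an $n$-angle $A_\bullet$, $\chi(A_\bullet)=\sum_{i=1}^n(-1)^{i+1}\langle A_i\rangle$; $R(\mathcal{C})$ is generated by all $\chi(A_\bullet)$, together with $\langle 0\rangle$ when $n$ is even; $K_0(\mathcal{C})=F(\mathcal{C})/R(\mathcal{C})$,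 $[A]$ the class of $\langle A\rangle$. An additive functor $L:\mathcal{C}\to\mathcal{C}'$ between $n$-angulated categories is $n$-angulated if there is a natural isomorphism $\eta:L\circ\Sigma\to\Sigma'\circ L$ such that $L$ sends each $n$-angle $(A_\bullet,\alpha)$ to the $n$-angle $L A_1\xrightarrow{L\alpha_1}\cdots\xrightarrow{L\alpha_{n-1}}LA_n\xrightarrow{\eta\circ L\alpha_n}\Sigma'LA_1$. An $n$-angulated subcategory of $(\mathcal{C},\Sigma)$ is a full subcategory $\mathcal{A}$, closed under isomorphisms, on which $\Sigma$ restricts to an automorphism, equipped with $n$-angles making $(\mathcal{A},\Sigma)$ $n$-angulated, such that the inclusion $\mathcal{A}\to\mathcal{C}$ is $n$-angulated. $\mathcal{A}$ is dense if every object of $\mathcal{C}$ is a direct summand of an object of $\mathcal{A}$; complete if whenever an $n$-angle $A_1\to\cdots\to A_n\to\Sigma A_1$ in $\mathcal{C}$ has $n-1$ of $A_1,\dots,A_n$ in $\mathcal{A}$, the remaining one is in $\mathcal{A}$. *)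

From HB Require Import structures.
From mathcomp Require Import all_boot all_algebra.

Set Implicit Arguments.
Unset Strict Implicit.
Unset Printing Implicit Defensive.

Import GRing.Theory.

Record addcat := AddCat {
  Obj :> Type;
  Hom : Obj -> Obj -> zmodType;
  comp : forall a b c : Obj, Hom b c -> Hom a b -> Hom a c;
  idm : forall a : Obj, Hom a a;
  compA : forall a b c d (h : Hom c d) (g : Hom b c) (f : Hom a b),
      comp h (comp g f) = comp (comp h g) f;
  comp1m : forall a b (f : Hom a b), comp (idm b) f = f;
  compm1 : forall a b (f : Hom a b), comp f (idm a) = f;
  compDl : forall a b c (g g' : Hom b c) (f : Hom a b),
      (comp (g + g') f = comp g f + comp g' f)%R;
  compDr : forall a b c (g : Hom b c) (f f' : Hom a b),
      (comp g (f + f') = comp g f + comp g f')%R;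
  zero_ob : Obj;
  zero_ob_id : idm zero_ob = 0%R;
  bp : Obj -> Obj -> Obj;
  bp_inl : forall a b, Hom a (bp a b);
  bp_inr : forall a b, Hom b (bp a b);
  bp_pl : forall a b, Hom (bp a b) a;
  bp_pr : forall a b, Hom (bp a b) b;
  bp_ll : forall a b, comp (bp_pl a b) (bp_inl a b) = idm a;
  bp_rr : forall a b, comp (bp_pr a b) (bp_inr a b) = idm b;
  bp_lr : forall a b, comp (bp_pl a b) (bp_inr a b) = 0%R;
  bp_rl : forall a b, comp (bp_pr a b) (bp_inl a b) = 0%R;
  bp_id : forall a b, (comp (bp_inl a b) (bp_pl a b)
                      + comp (bp_inr a b) (bp_pr a b))%R = idm (bp a b)
}.

Arguments Hom {_}.
Arguments comp {_ _ _ _} _ _.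
Arguments idm {_}.
Arguments zero_ob {_}.
Arguments bp {_}.
Arguments bp_inl {_}.
Arguments bp_inr {_}.
Arguments bp_pl {_}.
Arguments bp_pr {_}.

Record autom (C : addcat) := Autom {
  So : C -> C;
  Sm : forall a b : C, Hom a b -> Hom (So a) (So b);
  Sm_comp : forall a b c (g : Hom b c) (f : Hom a b),
      Sm (comp g f) = comp (Sm g) (Sm f);
  Sm_id : forall a, Sm (idm a) = idm (So a);
  Sm_add : forall a b (f g : Hom a b), (Sm (f + g) = Sm f + Sm g)%R;
  So_bij : bijective So;
  Sm_bij : forall a b, bijective (@Sm a b)
}.

Arguments So {_}.
Arguments Sm {_} _ {_ _}.

Section NAngulated.
Variables (n : nat) (C : addcat) (Sg : autom C).

Local Notation S := (So Sg).
Local Notation Sh := (Sm Sg).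

Definition isoObj (a b : C) : Prop :=
  exists (f : Hom a b) (g : Hom b a), comp g f = idm a /\ comp f g = idm b.

Definition isoH (a b : C) (f : Hom a b) : Prop :=
  exists g : Hom b a, comp g f = idm a /\ comp f g = idm b.

Definition Arr : Type := {a : C & {b : C & Hom a b}}.
Definition mkA (a b : C) (f : Hom a b) : Arr := existT _ a (existT _ b f).
Definition dom (x : Arr) : C := projT1 x.
Definition cod (x : Arr) : C := projT1 (projT2 x).
Definition SA (x : Arr) : Arr := mkA (Sh (projT2 (projT2 x))).
Definition negA (x : Arr) : Arr := mkA (- projT2 (projT2 x))%R.

(* An n-Sigma-sequence A_1 -a_1-> A_2 -> ... -> A_n -a_n-> Sigma A_1 is
   encoded (0-based) as X : nat -> Arr with X i = a_{i+1} for i < n;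
   entries X i with i >= n are irrelevant. *)
Definition nsseq : Type := nat -> Arr.
Definition obj (X : nsseq) (i : nat) : C := dom (X i).

Definition is_nseq (X : nsseq) : Prop :=
  (forall i, i.+1 < n -> cod (X i) = dom (X i.+1)) /\
  cod (X n.-1) = S (dom (X 0)).

Definition inP (P : C -> Prop) (X : nsseq) : Prop :=
  forall i, i < n -> P (obj X i).

Definition rot (X : nsseq) : nsseq := fun i =>
  if i.+1 < n then X i.+1
  else if odd n then negA (SA (X 0)) else SA (X 0).

Definition commsq (f g h k : Arr) : Prop :=
  exists (a b c d : C) (f' : Hom a b) (g' : Hom b d) (h' : Hom a c)
         (k' : Hom c d),
    [/\ f = mkA f', g = mkA g', h = mkA h', k = mkA k' &
        comp g' f' = comp k' h'].

(* Morphisms (phi_1, ..., phi_n) of n-Sigma-sequences (phi i = phi_{i+1}). *)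
Definition seqmor (X Y : nsseq) (phi : nat -> Arr) : Prop :=
  [/\ forall i, i < n -> dom (phi i) = obj X i /\ cod (phi i) = obj Y i,
      forall i, i.+1 < n -> commsq (X i) (phi i.+1) (phi i) (Y i) &
      commsq (X n.-1) (SA (phi 0)) (phi n.-1) (Y n.-1)].

Definition isoA (x : Arr) : Prop :=
  exists (a b : C) (f : Hom a b), x = mkA f /\ isoH f.

Definition seqiso (X Y : nsseq) (phi : nat -> Arr) : Prop :=
  seqmor X Y phi /\ forall i, i < n -> isoA (phi i).

Definition bpmap (a a' b b' : C) (f : Hom a a') (g : Hom b b')
  : Hom (bp a b) (bp a' b') :=
  (comp (bp_inl a' b') (comp f (bp_pl a b))
  + comp (bp_inr a' b') (comp g (bp_pr a b)))%R.

Definition bpmapS (a b a0 b0 : C) (f : Hom a (S a0)) (g : Hom b (S b0))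
  : Hom (bp a b) (S (bp a0 b0)) :=
  (comp (Sh (bp_inl a0 b0)) (comp f (bp_pl a b))
  + comp (Sh (bp_inr a0 b0)) (comp g (bp_pr a b)))%R.

Definition dsum (X Y Z : nsseq) : Prop :=
  (forall i, i.+1 < n -> exists (a a' b b' : C) (f : Hom a a') (g : Hom b b'),
      [/\ X i = mkA f, Y i = mkA g & Z i = mkA (bpmap f g)]) /\
  (exists (a b a0 b0 : C) (f : Hom a (S a0)) (g : Hom b (S b0)),
      [/\ a0 = obj X 0, b0 = obj Y 0, X n.-1 = mkA f, Y n.-1 = mkA g &
          Z n.-1 = mkA (bpmapS f g)]).

Definition triv (z A : C) : nsseq := fun i =>
  if i == 0%N then mkA (idm A)
  else if i == 1%N then mkA (0%R : Hom A z)
  else if i.+1 < n then mkA (0%R : Hom z z)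
  else mkA (0%R : Hom z (S A)).

Definition mat3 (a a' b b' : C) (al : Hom a a') (ph : Hom a b') (be : Hom b b')
  : Hom (bp a b) (bp a' b') :=
  (comp (bp_inl a' b') (comp (- al) (bp_pl a b))
  + comp (bp_inr a' b') (comp ph (bp_pl a b))
  + comp (bp_inr a' b') (comp be (bp_pr a b)))%R.

Definition matS (a1 a2 b1 bn : C) (al : Hom a1 a2) (ph : Hom a1 b1)
  (be : Hom bn (S b1)) : Hom (bp (S a1) bn) (S (bp a2 b1)) :=
  (comp (Sh (bp_inl a2 b1)) (comp (- Sh al) (bp_pl (S a1) bn))
  + comp (Sh (bp_inr a2 b1)) (comp (Sh ph) (bp_pl (S a1) bn))
  + comp (Sh (bp_inr a2 b1)) (comp be (bp_pr (S a1) bn)))%R.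

Definition cone (X Y : nsseq) (phi : nat -> Arr) (Z : nsseq) : Prop :=
  (forall j, j.+1 < n ->
     exists (a a' b b' : C) (al : Hom a a') (ph : Hom a b') (be : Hom b b'),
       [/\ X j.+1 = mkA al, phi j.+1 = mkA ph, Y j = mkA be &
           Z j = mkA (mat3 al ph be)]) /\
  (exists (a1 a2 b1 bn : C) (al : Hom a1 a2) (ph : Hom a1 b1)
          (be : Hom bn (S b1)),
     [/\ X 0 = mkA al, phi 0 = mkA ph, Y n.-1 = mkA be &
         Z n.-1 = mkA (matS al ph be)]).

(* (P, Sigma) is an n-angulated (full, additive) subcategory with n-angles N;
   for C itself take P := fun _ => True. *)
Record nangulated (P : C -> Prop) (N : nsseq -> Prop) : Prop := {
  na_zero : exists z, P z /\ idm z = 0%R;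
  na_bp : forall a b, P a -> P b -> P (bp a b);
  na_S : forall a, P a -> P (S a);
  na_Sinv : forall b, P b -> exists a, P a /\ S a = b;
  na_seq : forall X, N X -> is_nseq X /\ inP P X;
  na_dsum : forall X Y Z, N X -> N Y -> dsum X Y Z -> N Z;
  na_summand : forall X Y Z, is_nseq X -> is_nseq Y -> inP P X -> inP P Y ->
      dsum X Y Z -> N Z -> N X /\ N Y;
  na_iso : forall X Y phi, inP P Y -> N X -> seqiso X Y phi -> N Y;
  na_triv : forall z A, P z -> idm z = 0%R -> P A -> N (triv z A);
  na_ext : forall (a b : C) (f : Hom a b), P a -> P b ->
      exists X, N X /\ X 0 = mkA f;
  na_rot : forall X, is_nseq X -> inP P X -> (N X <-> N (rot X));
  na_mor : forall X Y (f0 f1 : Arr), N X -> N Y ->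
      dom f0 = obj X 0 -> cod f0 = obj Y 0 ->
      dom f1 = obj X 1 -> cod f1 = obj Y 1 ->
      commsq (X 0) f1 f0 (Y 0) ->
      exists phi, [/\ phi 0 = f0, phi 1%N = f1 & seqmor X Y phi];
  na_cone : forall X Y (f0 f1 : Arr), N X -> N Y ->
      dom f0 = obj X 0 -> cod f0 = obj Y 0 ->
      dom f1 = obj X 1 -> cod f1 = obj Y 1 ->
      commsq (X 0) f1 f0 (Y 0) ->
      exists phi Z, [/\ phi 0 = f0, phi 1%N = f1, seqmor X Y phi,
                        cone X Y phi Z & N Z]
}.

Definition etaseq (eta : forall a : C, Hom (S a) (S a)) (X Y : nsseq) : Prop :=
  (forall i, i.+1 < n -> Y i = X i) /\
  exists (c a : C) (h : Hom c (S a)),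
    X n.-1 = mkA h /\ Y n.-1 = mkA (comp (eta a) h).

Record nang_subcat (N : nsseq -> Prop) (P : C -> Prop) (NA : nsseq -> Prop)
  : Prop := {
  sub_isoclosed : forall a b, isoObj a b -> P a -> P b;
  sub_nang : nangulated P NA;
  sub_incl : exists eta : forall a : C, Hom (S a) (S a),
      [/\ forall a, P a -> isoH (eta a),
          forall (a b : C) (f : Hom a b), P a -> P b ->
            comp (eta b) (Sh f) = comp (Sh f) (eta a) &
          forall X Y, NA X -> etaseq eta X Y -> N Y]
}.

Definition complete (N : nsseq -> Prop) (P : C -> Prop) : Prop :=
  forall X, N X -> forall j, j < n ->
    (forall i, i < n -> i != j -> P (obj X i)) -> P (obj X j).

Definition dense (P : C -> Prop) : Prop :=
  forall c : C, exists a d : C, P a /\ isoObj a (bp c d).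

(* Grothendieck group, via its universal property:
   chi(X) = sum_i (-1)^(i+1) <A_i>  (1-based)  = sum_i (-1)^i <obj X i> (0-based). *)
Definition chi (K : zmodType) (f : C -> K) (X : nsseq) : K :=
  (\sum_(i < n) (if odd i then - f (obj X i) else f (obj X i)))%R.

Definition K0rel (N : nsseq -> Prop) (K : zmodType) (f : C -> K) : Prop :=
  [/\ forall a b, isoObj a b -> f a = f b,
      forall X, N X -> chi f X = 0%R &
      ~~ odd n -> f zero_ob = 0%R].

(* (K, cls) is K_0(C) = F(C)/R(C) with cls A = [A]. *)
Definition is_K0 (N : nsseq -> Prop) (K : zmodType) (cls : C -> K) : Prop :=
  K0rel N cls /\
  forall (G : zmodType) (g : C -> G), K0rel N g ->
    exists! h : K -> G,
      (forall x y, h (x - y)%R = (h x - h y)%R) /\ (forall a, h (cls a) = g a).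

End NAngulated.

From Pilot Require Import Defs.
From HB Require Import structures.
From mathcomp Require Import all_boot all_algebra.
From mathcomp Require Import zify.

(* Since n is odd, the Euler relation of the rotated trivial n-angle
   A -> 0 -> ... -> 0 -> Sigma A gives [Sigma A] = -[A], and adding it to the
   trivial n-angle on B gives [B (+) A] = [A] + [B].  Hence A_H is closed under
   Sigma, Sigma^-1 and (+), contains A (+) Sigma A for every A (density), and is
   complete since chi = 0 expresses each class through the others.  (N2)-(N4)
   are inherited from C, as rotations and cones of n-angles of A_H have objects
   A_(i+1), Sigma A_1 and A_(i+1) (+) B_i.  For (N1)(c), extend f to an n-angle
   of C and add rotated trivial n-angles killing the classes of the middle
   objects one at a time without changing the first morphism up to
   isomorphism; the last object then lies in A_H by completeness. *)

Set Implicit Arguments.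
Unset Strict Implicit.
Unset Printing Implicit Defensive.
Import GRing.Theory.
Local Open Scope ring_scope.
Local Notation comp := Defs.comp (only parsing).
Local Notation Hom := Defs.Hom (only parsing).

Section AdditiveCategory.
Variable C : addcat.

Lemma comp0m (a b c : C) (f : Hom a b) : comp (0 : Hom b c) f = 0.
Proof.
by apply: (@addIr _ (comp (0 : Hom b c) f)); rewrite -compDl !add0r.
Qed.

Lemma compm0 (a b c : C) (g : Hom b c) : comp g (0 : Hom a b) = 0.
Proof.
by apply: (@addIr _ (comp g (0 : Hom a b))); rewrite -compDr !add0r.
Qed.

Lemma hom_to_zero (a z : C) (f : Hom a z) : idm z = 0 -> f = 0.
Proof. by move=> hz; rewrite -(comp1m f) hz comp0m. Qed.

Lemma bp_inl_pl_zero (a z : C) :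
  idm z = 0 -> comp (bp_inl a z) (bp_pl a z) = idm (bp a z).
Proof. by move=> hz; rewrite -bp_id (hom_to_zero (bp_pr a z) hz) compm0 addr0. Qed.

Lemma bp_inr_pr_zero (z a : C) :
  idm z = 0 -> comp (bp_inr z a) (bp_pr z a) = idm (bp z a).
Proof. by move=> hz; rewrite -bp_id (hom_to_zero (bp_pl z a) hz) compm0 add0r. Qed.

Lemma isoObj_refl (a : C) : isoObj a a.
Proof. by exists (idm a), (idm a); rewrite comp1m. Qed.

Lemma isoObj_bp_zeror (a z : C) : idm z = 0 -> isoObj (bp a z) a.
Proof. by move=> hz; exists (bp_pl a z), (bp_inl a z); rewrite bp_ll bp_inl_pl_zero. Qed.

Lemma isoObj_bp_zerol (z a : C) : idm z = 0 -> isoObj (bp z a) a.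
Proof. by move=> hz; exists (bp_pr z a), (bp_inr z a); rewrite bp_rr bp_inr_pr_zero. Qed.

Lemma isoA_idm (a : C) : isoA (mkA (idm a)).
Proof. by exists a, a, (idm a); split=> //; exists (idm a); rewrite comp1m. Qed.

Lemma isoA_bp_pl (a z : C) : idm z = 0 -> isoA (mkA (bp_pl a z)).
Proof.
move=> hz; exists (bp a z), a, (bp_pl a z); split=> //.
by exists (bp_inl a z); rewrite bp_ll bp_inl_pl_zero.
Qed.

Lemma mkA_proj (x : Arr C) : x = mkA (projT2 (projT2 x)).
Proof. by case: x => a [b f]. Qed.

Definition cast_cod (x : Arr C) (c : C) (e : cod x = c) : Hom (dom x) c :=
  match e in _ = t return Hom (dom x) t with erefl => projT2 (projT2 x) end.

Lemma mkA_cast_cod (x : Arr C) (c : C) (e : cod x = c) : x = mkA (cast_cod e).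
Proof. by case: x e => a [b f] /= e; case: c / e. Qed.

Lemma commsq_mkA (a b c d : C) (f : Hom a b) (g : Hom b d) (h : Hom a c) (k : Hom c d) :
  comp g f = comp k h -> commsq (mkA f) (mkA g) (mkA h) (mkA k).
Proof. by move=> e; exists a, b, c, d, f, g, h, k. Qed.

Lemma commsq_idm (x : Arr C) : commsq x (mkA (idm (cod x))) (mkA (idm (dom x))) x.
Proof. by case: x => a [b f]; apply: commsq_mkA; rewrite comp1m compm1. Qed.

Lemma commsq_bpmap_pl (a a' b b' : C) (f : Hom a a') (g : Hom b b') :
  commsq (mkA (bpmap f g)) (mkA (bp_pl a' b')) (mkA (bp_pl a b)) (mkA f).
Proof.
apply: commsq_mkA.
by rewrite /bpmap compDr !Defs.compA bp_ll bp_lr comp1m !comp0m addr0.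
Qed.

Lemma commsq_pl_inl (a b c : C) (m : Hom (bp a b) c) : idm b = 0 ->
  commsq (mkA m) (mkA (idm c)) (mkA (bp_pl a b)) (mkA (comp m (bp_inl a b))).
Proof.
by move=> hb; apply: commsq_mkA; rewrite comp1m -Defs.compA bp_inl_pl_zero // compm1.
Qed.

End AdditiveCategory.

Section SignedSums.
Variable K : zmodType.

(* [chi n f X] is [\sum_(i < n) signed i (f (obj X i))] by conversion. *)
Definition signed (i : nat) (x : K) : K := if odd i then - x else x.

Lemma sum_signed_const m x : \sum_(i < m) signed i x = if odd m then x else 0.
Proof.
elim: m => [|m IH]; first by rewrite big_ord0.
by rewrite big_ord_recr /= IH /signed; case: (odd m); rewrite ?subrr ?add0r.
Qed.

Lemma sum_signed_supp m (F : nat -> K) (s : seq nat) :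
  uniq s -> all (fun i => i < m)%N s ->
  (forall i, (i < m)%N -> i \notin s -> F i = 0) ->
  \sum_(i < m) signed i (F i) = \sum_(i <- s) signed i (F i).
Proof.
move=> us sm F0; rewrite -(big_mkord xpredT (fun i => signed i (F i))).
rewrite (bigID (mem s)) /= [X in _ + X]big1_seq ?addr0; last first.
  move=> i /andP[si]; rewrite mem_index_iota => im.
  by rewrite F0 // /signed; case: (odd i); rewrite ?oppr0.
rewrite -big_filter; apply: perm_big; apply: uniq_perm => //.
  by rewrite filter_uniq ?iota_uniq.
move=> i; rewrite mem_filter mem_index_iota andb_idr // => si.
exact: (allP sm).
Qed.

End SignedSums.

Section Sequences.
Variables (n : nat) (C : addcat) (Sg : autom C).
Local Notation S := (So Sg).
Local Notation rot := (Defs.rot n Sg).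

Lemma obj_rot X i : obj (rot X) i = if (i.+1 < n)%N then obj X i.+1 else S (obj X 0).
Proof. by rewrite /obj /Defs.rot; case: ifP => //; case: (odd n). Qed.

Lemma obj_iter_rot X j i : (j <= n)%N -> (i < n)%N ->
  obj (iter j rot X) i =
    if (i + j < n)%N then obj X (i + j) else S (obj X (i + j - n)).
Proof.
elim: j i => [|j IH] i hj hi; first by rewrite addn0 hi.
rewrite iterS obj_rot; case: ifP => hi1; first by rewrite IH ?addSnnS // ltnW.
rewrite (IH 0%N (ltnW hj)) ?add0n ?hj; last by lia.
have -> : (i + j.+1 < n)%N = false by lia.
by have -> : (i + j.+1 - n = j)%N by lia.
Qed.

Lemma obj_triv z A i : obj (triv n Sg z A) i = if (i <= 1)%N then A else z.
Proof. by rewrite /obj /triv; case: i => [|[|i]] //=; case: ifP. Qed.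

Lemma obj_rot_triv0 z A : (1 < n)%N -> obj (rot (triv n Sg z A)) 0 = A.
Proof. by move=> n1; rewrite obj_rot obj_triv n1. Qed.

Lemma obj_rot_triv_mid z A i : (0 < i)%N -> (i.+1 < n)%N -> obj (rot (triv n Sg z A)) i = z.
Proof. by move=> i0 hi; rewrite obj_rot obj_triv hi ltnNge i0. Qed.

Lemma obj_rot_triv_last z A : (0 < n)%N -> obj (rot (triv n Sg z A)) n.-1 = S A.
Proof. by move=> n0; rewrite obj_rot prednK // ltnn obj_triv. Qed.

Lemma obj_dsum X Y Z i : dsum n Sg X Y Z -> (i < n)%N ->
  obj Z i = bp (obj X i) (obj Y i).
Proof.
case=> hmid [a [b [a0 [b0 [f [g [_ _ eX eY eZ]]]]]]] hi.
have [hi1 | hin] := ltnP i.+1 n.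
  by rewrite /obj; have [? [? [? [? [? [? [-> -> ->]]]]]]] := hmid i hi1.
have -> : i = n.-1 by lia.
by rewrite /obj eX eY eZ.
Qed.

Lemma obj_cone X Y phi Z i : cone n Sg X Y phi Z -> (i < n)%N ->
  obj Z i = bp (obj (rot X) i) (obj Y i).
Proof.
case=> hmid [a1 [a2 [b1 [bn [al [ph [be [eX _ eY eZ]]]]]]]] hi.
rewrite obj_rot; have [hi1 | hin] := ltnP i.+1 n.
  by rewrite /obj; have [? [? [? [? [? [? [? [-> _ -> ->]]]]]]]] := hmid i hi1.
have -> : i = n.-1 by lia.
by rewrite /obj eX eY eZ.
Qed.

Section DirectSum.
Variables (X Y : nsseq C).
Hypotheses (eX : cod (X n.-1) = S (obj X 0)) (eY : cod (Y n.-1) = S (obj Y 0)).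

Definition dsum_seq : nsseq C := fun i =>
  if (i.+1 < n)%N then mkA (bpmap (projT2 (projT2 (X i))) (projT2 (projT2 (Y i))))
  else mkA (bpmapS (cast_cod eX) (cast_cod eY)).

Lemma dsum_seqP : (0 < n)%N -> dsum n Sg X Y dsum_seq.
Proof.
move=> n0; split.
  move=> i hi; do 6 eexists; split; [exact: mkA_proj | exact: mkA_proj |].
  by rewrite /dsum_seq hi.
do 6 eexists; split; [by [] | by [] | exact: mkA_cast_cod | exact: mkA_cast_cod |].
by rewrite /dsum_seq prednK ?ltnn.
Qed.

End DirectSum.

End Sequences.

Section NAngles.
Variables (n : nat) (C : addcat) (Sg : autom C) (N : nsseq C -> Prop).
Hypotheses (hn : (3 <= n)%N) (hN : nangulated n Sg (fun _ => True) N).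
Local Notation S := (So Sg).
Local Notation Sh := (Sm Sg).
Local Notation rot := (Defs.rot n Sg).

Lemma N_nseq X : N X -> is_nseq n Sg X.
Proof. by case/(na_seq hN). Qed.

Lemma N_rot X : N X -> N (rot X).
Proof. by move=> hX; apply/(na_rot hN (N_nseq hX)). Qed.

Lemma N_iter_rot j X : N X -> N (iter j rot X).
Proof. by move=> hX; elim: j => //= j; apply: N_rot. Qed.

Lemma N_triv z A : idm z = 0 -> N (triv n Sg z A).
Proof. by move=> hz; apply: (na_triv hN (z := z) (A := A) I hz I). Qed.

Lemma N_dsum X Y : N X -> N Y ->
  exists2 Z, N Z & forall i, (i < n)%N -> obj Z i = bp (obj X i) (obj Y i).
Proof.
move=> hX hY; have [_ eX] := N_nseq hX; have [_ eY] := N_nseq hY.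
have hZ := dsum_seqP eX eY (ltnW (ltnW hn)).
by exists (dsum_seq eX eY); [exact: (na_dsum hN hX hY hZ) | move=> i; apply: obj_dsum hZ].
Qed.

Lemma N_eq_on X Y : N X -> (forall i, (i < n)%N -> Y i = X i) -> N Y.
Proof.
move=> hX eXY; have [hmid hlast] := N_nseq hX.
apply: (na_iso hN (fun _ _ => I) hX (phi := fun i => mkA (idm (obj X i)))).
split; last by move=> i _; apply: isoA_idm.
split.
- by move=> i hi; rewrite /obj eXY.
- by move=> i hi; rewrite eXY 1?ltnW // /obj -hmid //; apply: commsq_idm.
- by rewrite eXY ?prednK ?(ltnW (ltnW hn)) // /SA /= Sm_id /obj -hlast; apply: commsq_idm.
Qed.

(* If the first two objects of Y are zero, the projections identify X (+) Y
   with an n-angle having the same first morphism as X. *)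
Section Absorb.
Variables X Y : nsseq C.
Hypotheses (hX : N X) (hY : N Y).
Hypotheses (hY0 : idm (obj Y 0) = 0) (hY1 : idm (obj Y 1) = 0).

Let eX := (N_nseq hX).2.
Let eY := (N_nseq hY).2.
Let Z := dsum_seq eX eY.

Definition absorbed : nsseq C := fun i =>
  if i == 0%N then X 0
  else if i == 1%N then
    mkA (comp (bpmap (projT2 (projT2 (X 1%N))) (projT2 (projT2 (Y 1%N))))
              (bp_inl (obj X 1) (obj Y 1)))
  else if (i.+1 < n)%N then Z i
  else mkA (comp (Sh (bp_pl (obj X 0) (obj Y 0))) (bpmapS (cast_cod eX) (cast_cod eY))).

Definition absorbing_iso (i : nat) : Arr C :=
  if i == 0%N then mkA (bp_pl (obj X 0) (obj Y 0))
  else if i == 1%N then mkA (bp_pl (obj X 1) (obj Y 1))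
  else mkA (idm (obj Z i)).

Lemma absorbing_isoP : seqiso n Sg Z absorbed absorbing_iso.
Proof.
have hZ := dsum_seqP eX eY (ltnW (ltnW hn)).
have [hXmid _] := N_nseq hX; have [hYmid _] := N_nseq hY.
have [hZmid _] := N_nseq (na_dsum hN hX hY hZ).
have hl : (n.-1.+1 < n)%N = false by lia.
have hl0 : (n.-1 == 0%N) = false by lia.
have hl1 : (n.-1 == 1%N) = false by lia.
have hZl : Z n.-1 = mkA (bpmapS (cast_cod eX) (cast_cod eY)) by rewrite /Z /dsum_seq hl.
split; last by move=> [|[|i]] hi; [apply: isoA_bp_pl.. | apply: isoA_idm].
split.
- move=> [|[|i]] hi; rewrite /absorbing_iso /absorbed /=.
  + by rewrite (obj_dsum hZ).
  + by rewrite (obj_dsum hZ).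
  split=> //; rewrite /obj /=; case: ifP => // hlast.
  have -> : i.+2 = n.-1 by lia.
  by rewrite hZl.
- move=> [|[|i]] hi; rewrite /absorbing_iso /absorbed /=.
  + rewrite /Z /dsum_seq (ltnW hn) /obj -(hXmid 0%N) ?(ltnW hn) // -(hYmid 0%N) ?(ltnW hn) //.
    by rewrite [W in commsq _ _ _ W]mkA_proj; apply: commsq_bpmap_pl.
  + rewrite /obj -hZmid // /Z /dsum_seq.
    by rewrite hn; apply: commsq_pl_inl.
  + by rewrite hi /obj -hZmid //; apply: commsq_idm.
- rewrite /absorbing_iso /absorbed hl0 hl1 hl /= hZl /obj hZl /SA /=.
  by apply: commsq_mkA; rewrite compm1.
Qed.

Lemma absorb_dsum : exists X', [/\ N X', X' 0 = X 0, obj X' 1 = obj X 1 &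
  forall i, (2 <= i < n)%N -> obj X' i = bp (obj X i) (obj Y i)].
Proof.
have hZ := dsum_seqP eX eY (ltnW (ltnW hn)).
exists absorbed; split=> //.
- exact: (na_iso hN (fun _ _ => I) (na_dsum hN hX hY hZ) absorbing_isoP).
- move=> [|[|i]] // /andP[_ hi]; rewrite /obj /absorbed /=.
  case: ifP => hlast; first exact: obj_dsum hZ hi.
  have -> : i.+2 = n.-1 by lia.
  by [].
Qed.

End Absorb.

End NAngles.

Section Grothendieck.
Variables (n : nat) (C : addcat) (Sg : autom C) (N : nsseq C -> Prop).
Variables (K : zmodType) (cls : C -> K).
Hypotheses (hn : (3 <= n)%N) (hodd : odd n).
Hypotheses (hN : nangulated n Sg (fun _ => True) N) (hK : K0rel n N cls).
Let n1 : (1 < n)%N := ltnW hn.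
Let n0 : (0 < n)%N := ltnW n1.
Local Notation S := (So Sg).
Local Notation rot := (Defs.rot n Sg).

Lemma cls_iso a b : isoObj a b -> cls a = cls b.
Proof. by case: hK => h _ _; apply: h. Qed.

Lemma cls_chi X : N X -> \sum_(i < n) signed i (cls (obj X i)) = 0.
Proof. by case: hK => _ h _; apply: h. Qed.

Lemma cls_chi_supp X (s : seq nat) : N X -> uniq s -> all (fun i => i < n)%N s ->
  (forall i, (i < n)%N -> i \notin s -> cls (obj X i) = 0) ->
  \sum_(i <- s) signed i (cls (obj X i)) = 0.
Proof.
by move=> hX us sn F0; rewrite -(sum_signed_supp (m := n) (F := fun i => cls (obj X i))) ?cls_chi.
Qed.

Lemma signed_last (x : K) : signed n.-1 x = x.
Proof. by rewrite /signed -subn1 oddB ?hodd // (ltnW (ltnW hn)). Qed.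

Lemma cls_zero z : idm z = 0 -> cls z = 0.
Proof.
move=> hz; have := cls_chi (N_triv hN z hz).
under eq_bigr => i _ do rewrite obj_triv if_same.
by rewrite sum_signed_const hodd.
Qed.

Lemma cls_bp_zeror a z : idm z = 0 -> cls (bp a z) = cls a.
Proof. by move=> hz; apply/cls_iso/isoObj_bp_zeror. Qed.

Lemma cls_bp_zerol z a : idm z = 0 -> cls (bp z a) = cls a.
Proof. by move=> hz; apply/cls_iso/isoObj_bp_zerol. Qed.

Lemma cls_Sigma a : cls (S a) = - cls a.
Proof.
have hX := N_rot hN (N_triv hN a (zero_ob_id C)).
have uniq_s : uniq [:: 0; n.-1]%N by rewrite /= inE andbT; lia.
have lt_s : all (fun i => i < n)%N [:: 0; n.-1]%N by rewrite /= andbT prednK ?n0 ?leqnn.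
have supp i : (i < n)%N -> i \notin [:: 0; n.-1]%N ->
    cls (obj (rot (triv n Sg zero_ob a)) i) = 0.
  move=> hi; rewrite !inE => /norP[i0 il].
  by rewrite obj_rot_triv_mid ?cls_zero ?zero_ob_id //; lia.
have := cls_chi_supp hX uniq_s lt_s supp.
rewrite big_cons big_seq1 signed_last obj_rot_triv0 // obj_rot_triv_last //.
by move/eqP; rewrite addrC addr_eq0 => /eqP.
Qed.

Lemma cls_bp a b : cls (bp a b) = cls a + cls b.
Proof.
have z0 := zero_ob_id C.
have [Z hZ objZ] := N_dsum hn hN (N_triv hN a z0) (N_rot hN (N_triv hN b z0)).
have uniq_s : uniq [:: 0; 1; n.-1]%N by rewrite /= !inE !andbT; lia.
have lt_s : all (fun i => i < n)%N [:: 0; 1; n.-1]%N.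
  by rewrite /= andbT; apply/and3P; split; lia.
have supp i : (i < n)%N -> i \notin [:: 0; 1; n.-1]%N -> cls (obj Z i) = 0.
  move=> hi; rewrite !inE => /norP[i0 /norP[i1 il]].
  rewrite objZ // obj_triv obj_rot_triv_mid; try lia.
  rewrite (_ : (i <= 1)%N = false); last by lia.
  by rewrite (cls_bp_zeror _ z0) (cls_zero z0).
have := cls_chi_supp hZ uniq_s lt_s supp.
rewrite 2!big_cons big_seq1 signed_last !objZ // ?prednK //.
rewrite !obj_triv obj_rot_triv0 // obj_rot_triv_mid // obj_rot_triv_last //.
rewrite (_ : (n.-1 <= 1)%N = false); last by lia.
rewrite /= (cls_bp_zeror _ z0) (cls_bp_zerol _ z0) cls_Sigma /signed /=.
by move/eqP; rewrite -opprD subr_eq0 => /eqP.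
Qed.

(* Add the trivial n-angle on A_k, rotated so that Sigma A_k sits in position k
   and positions 0, ..., k-1 hold zero objects; as [Sigma A_k] = -[A_k], the
   class in position k becomes zero. *)
Lemma nangle_kill_cls X k : N X -> (2 <= k)%N -> (k.+1 < n)%N ->
  exists X', [/\ N X', X' 0 = X 0,
    forall i, (i < k)%N -> cls (obj X' i) = cls (obj X i) & cls (obj X' k) = 0].
Proof.
move=> hX k2 kn.
pose Y := iter (n - k) rot (triv n Sg zero_ob (obj X k)).
have hY : N Y := N_iter_rot hN _ (N_triv hN _ (zero_ob_id C)).
have objY_lt i : (i < k)%N -> obj Y i = zero_ob.
  move=> ik; rewrite obj_iter_rot ?obj_triv; [|exact: leq_subr | lia].
  by rewrite ifT ?ifF //; lia.
have objY_k : obj Y k = S (obj X k).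
  rewrite obj_iter_rot ?obj_triv; [|exact: leq_subr | lia].
  rewrite (_ : (k + (n - k) < n)%N = false); last by lia.
  by rewrite (_ : (k + (n - k) - n = 0)%N); last by lia.
have Y0 j : (j < k)%N -> idm (obj Y j) = 0.
  by move=> jk; rewrite objY_lt ?zero_ob_id.
have [X' [hX' e0 e1 eo]] := absorb_dsum hn hN hX hY (Y0 0%N (ltnW k2)) (Y0 1%N k2).
exists X'; split=> //.
  move=> [|[|i]] ik; [by rewrite /obj e0 | by rewrite e1 |].
  rewrite eo; last by lia.
  by rewrite cls_bp objY_lt // (cls_zero (zero_ob_id C)) addr0.
rewrite eo; last by lia.
by rewrite cls_bp objY_k cls_Sigma subrr.
Qed.

Lemma nangle_ext_cls0 (a b : C) (f : Hom a b) :
  exists X, [/\ N X, X 0 = mkA f & forall i, (2 <= i < n.-1)%N -> cls (obj X i) = 0].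
Proof.
suff /(_ (n - 3)%N) : forall m, (2 + m <= n.-1)%N -> exists X, [/\ N X, X 0 = mkA f &
    forall i, (2 <= i < 2 + m)%N -> cls (obj X i) = 0].
  have -> : (2 + (n - 3) = n.-1)%N by lia.
  by apply.
elim=> [|m IH] hm.
  have [X [hX eX]] := na_ext hN f I I.
  by exists X; split=> // i /andP[i2 i2']; rewrite leqNgt i2' in i2.
have [X [hX eX hcls]] := IH (ltnW hm).
have kn : ((2 + m).+1 < n)%N by lia.
have [X' [hX' eX' hlt hk]] := nangle_kill_cls hX (leq_addr m 2) kn.
exists X'; split=> //; first by rewrite eX'.
move=> i /andP[i2 hi]; have [ik | ki] := ltnP i (2 + m).
  by rewrite hlt // hcls // i2.
have -> : i = (2 + m)%N by lia.
exact: hk.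
Qed.

End Grothendieck.

Section ClassSubgroup.
Variables (n : nat) (C : addcat) (Sg : autom C) (N : nsseq C -> Prop).
Variables (K : zmodType) (cls : C -> K) (H : {pred K}).
Hypotheses (hn : (3 <= n)%N) (hodd : odd n).
Hypotheses (hN : nangulated n Sg (fun _ => True) N) (hK : K0rel n N cls).
Hypothesis hH : GRing.zmod_closed H.
HB.instance Definition _ := GRing.isZmodClosed.Build K H hH.

Local Notation S := (So Sg).
Local Notation rot := (Defs.rot n Sg).
Local Notation P := (fun A => cls A \in H).
Let clsS := cls_Sigma hn hodd hN hK.
Let clsD := cls_bp hn hodd hN hK.

Lemma rpred_signed i x : (signed i x \in H) = (x \in H).
Proof. by rewrite /signed; case: (odd i); rewrite ?rpredN. Qed.

Lemma complete_cls : complete n N P.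
Proof.
move=> X hX j hj hP; have := cls_chi hK hX.
rewrite (bigD1 (Ordinal hj)) //= => /eqP; rewrite addr_eq0 => /eqP e.
rewrite -(rpred_signed j) e rpredN rpred_sum // => i ij.
by rewrite rpred_signed hP // -(inj_eq val_inj).
Qed.

Lemma inP_rot X : inP n P X -> inP n P (rot X).
Proof.
move=> hX i hi /=; rewrite obj_rot; case: ifP => [|_]; first exact: hX.
by rewrite clsS rpredN hX; lia.
Qed.

Lemma inP_dsum X Y Z : dsum n Sg X Y Z -> inP n P X -> inP n P Y -> inP n P Z.
Proof.
by move=> hd hX hY i hi /=; rewrite (obj_dsum hd hi) clsD rpredD ?hX ?hY.
Qed.

Lemma inP_cone X Y phi Z :
  cone n Sg X Y phi Z -> inP n P X -> inP n P Y -> inP n P Z.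
Proof.
move=> hc hX hY i hi /=; rewrite (obj_cone hc hi) clsD.
by rewrite rpredD ?(inP_rot hX) ?hY.
Qed.

Lemma inP_triv z A : P z -> P A -> inP n P (triv n Sg z A).
Proof. by move=> hz hA i _ /=; rewrite obj_triv; case: ifP. Qed.

Lemma nangle_ext_inP (a b : C) (f : Hom a b) : P a -> P b ->
  exists X, (N X /\ inP n P X) /\ X 0 = mkA f.
Proof.
move=> ha hb; have [X [hX eX hcls]] := nangle_ext_cls0 hn hodd hN hK f.
have [hmid _] := N_nseq hN hX.
have inX i : (i < n.-1)%N -> P (obj X i).
  case: i => [|[|i]] hi /=; first by rewrite /obj eX.
    by rewrite /obj -hmid ?eX //; lia.
  by rewrite hcls ?rpred0 //; lia.
exists X; split=> //; split=> // i hi.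
have [il | li] := ltnP i n.-1; first exact: inX.
apply: complete_cls => // j hj ji; apply: inX; lia.
Qed.

Lemma nangulated_cls : nangulated n Sg P (fun X => N X /\ inP n P X).
Proof.
split.
- by exists zero_ob; rewrite (cls_zero hodd hN hK (zero_ob_id C)) rpred0 zero_ob_id.
- by move=> a b ha hb; rewrite clsD rpredD.
- by move=> a ha; rewrite clsS rpredN.
- move=> b hb; have [g gK Kg] := So_bij Sg.
  by exists (g b); rewrite Kg -rpredN -clsS Kg.
- by move=> X [hX PX]; split=> //; exact: (N_nseq hN hX).
- move=> X Y Z [hX PX] [hY PY] hd; split; first exact: (na_dsum hN hX hY hd).
  exact: inP_dsum hd PX PY.
- move=> X Y Z sX sY PX PY hd [hZ _].
  by have [] := na_summand hN sX sY (fun _ _ => I) (fun _ _ => I) hd hZ.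
- by move=> X Y phi PY [hX _] hs; split=> //; apply: (na_iso hN (fun _ _ => I) hX hs).
- by move=> z A hz z0 hA; split; [apply: N_triv | apply: inP_triv].
- by move=> a b f ha hb; apply: nangle_ext_inP.
- move=> X sX PX; split=> [[hX _] | [hR _]]; first by split; [apply: N_rot | apply: inP_rot].
  by split=> //; apply/(na_rot hN sX (fun _ _ => I)).
- by move=> X Y f0 f1 [hX _] [hY _]; apply: (na_mor hN hX hY).
- move=> X Y f0 f1 [hX PX] [hY PY] d0 c0 d1 c1 sq.
  have [phi [Z [p0 p1 hm hc hZ]]] := na_cone hN hX hY d0 c0 d1 c1 sq.
  by exists phi, Z; split=> //; split=> //; apply: inP_cone hc PX PY.
Qed.

Lemma nang_subcat_cls : nang_subcat n Sg N P (fun X => N X /\ inP n P X).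
Proof.
split; [by move=> a b hab; rewrite /= (cls_iso hK hab) | exact: nangulated_cls |].
exists (fun a => idm (S a)); split.
- by move=> a _; exists (idm (S a)); rewrite comp1m.
- by move=> a b f _ _; rewrite comp1m compm1.
- move=> X Y [hX _] [eY [c [a [h [eXl eYl]]]]]; apply: (N_eq_on hn hN hX) => i hi.
  have [i1 | ni] := ltnP i.+1 n; first exact: eY.
  have -> : i = n.-1 by lia.
  by rewrite eYl eXl comp1m.
Qed.

Lemma dense_cls : dense P.
Proof.
move=> c; exists (bp c (S c)), (S c); split; last exact: isoObj_refl.
by rewrite /= clsD clsS subrr rpred0.
Qed.

End ClassSubgroup.

Theorem lemma4p5 (n : nat) (C : addcat) (Sg : autom C)
  (N : nsseq C -> Prop) (K : zmodType) (cls : C -> K) (H : {pred K}) :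
  (3 <= n)%N -> odd n ->
  nangulated n Sg (fun _ => True) N ->
  is_K0 n N cls ->
  GRing.zmod_closed H ->
  nang_subcat n Sg N (fun A => cls A \in H)
    (fun X => N X /\ inP n (fun A => cls A \in H) X) /\
  complete n N (fun A => cls A \in H) /\
  dense (fun A => cls A \in H).
Proof.
move=> hn hodd hN [hK _] hH; split; first exact: (nang_subcat_cls hn hodd hN hK hH).
by split; [apply: (complete_cls hK hH) | apply: (dense_cls hn hodd hN hK hH)].
Qed.
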